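(* Let $G=(V,E)$ be a graph with no isolated vertices and $m\ge1$ edges, and let $d$ be an optimal solution of $\mathrm{IP}_{\mathrm{sparse}}$. Let $G_d=(V,E_d)$ be the graph with an edge $\{i,j\}$ for every pair $i\neq j$ with $d_{i,j}=0$. Then every connected component $C$ of $G_d$ induces a connected subgraph $G[C]$ of $G$.
   Context: $G=(V,E)$ is an undirected simple graph, $V=\{1,\dots,n\}$, $m=|E|$, adjacency matrix $A$, degrees $d_i$, modularity matrix $B_{i,j}=A_{i,j}-\frac{d_id_j}{2m}$. Variables $d_{i,j}$ satisfy $d_{i,j}=d_{j,i}$, $d_{i,i}=0$. $N(i)$ is the neighbor set of $i$ and $N(i,j)=(N(i)\cup N(j))\setminus\{i,j\}$. $\mathrm{IP}_{\mathrm{sparse}}$: maximize $-\frac{1}{2m}\sum_{i,j}B_{i,j}d_{i,j}$ subject to $d_{i,k}+d_{k,j}\ge d_{i,j}$ for every pair $i\ne j$ and every $k\in N(i,j)$, and $d_{i,j}\in\{0,1\}$ for all $i\ne j$. *)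

From HB Require Import structures.
From mathcomp Require Import all_boot all_order all_algebra.
Set Implicit Arguments. Unset Strict Implicit. Unset Printing Implicit Defensive.
Import Order.TTheory GRing.Theory Num.Theory.

Section Defs.
Variable T : finType.
Variable e : rel T.

Definition simple_graph : Prop := symmetric e /\ irreflexive e.

Definition deg (i : T) : nat := #|[set j | e i j]|.
Definition twom : nat := \sum_(i : T) deg i.
Definition num_edges : nat := twom %/ 2.

Definition no_isolated : Prop := forall i : T, exists j, e i j.

Definition modB (i j : T) : rat :=
  ((e i j : nat)%:R - ((deg i * deg j)%:R / (twom%:R)))%R.

Definition Nij (i j k : T) : bool := [&& (e i k || e j k), k != i & k != j].

Definition dval (d : T -> T -> bool) (i j : T) : rat := ((d i j : nat)%:R)%R.

Definition feasible_sparse (d : T -> T -> bool) : Prop :=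
  (forall i j, d i j = d j i) /\ (forall i, d i i = false) /\
  (forall i j k, i != j -> Nij i j k ->
     (dval d i k + dval d k j >= dval d i j)%R).

Definition obj_sparse (d : T -> T -> bool) : rat :=
  (- (1 / (twom%:R)) * \sum_(i : T) \sum_(j : T) modB i j * dval d i j)%R.

Definition optimal_sparse (d : T -> T -> bool) : Prop :=
  feasible_sparse d /\
  forall d', feasible_sparse d' -> (obj_sparse d' <= obj_sparse d)%R.

End Defs.

Definition Gd (T : finType) (d : T -> T -> bool) : rel T :=
  [rel i j | (i != j) && ~~ d i j].

Definition component (T : finType) (r : rel T) (x : T) : {set T} :=
  [set y | connect r x y].

Definition induced_connected (T : finType) (e : rel T) (C : {set T}) : Prop :=
  forall x y, x \in C -> y \in C ->
    connect [rel u v | [&& e u v, u \in C & v \in C]] x y.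

From HB Require Import structures.
From mathcomp Require Import all_boot all_order all_algebra.
Import Order.TTheory GRing.Theory Num.Theory.
Set Implicit Arguments. Unset Strict Implicit.

(* Let d be optimal for IP_sparse and C a connected component of
   G_d.  If G[C] were disconnected, let A be the vertices of C reachable from
   some x inside G[C]; then no edge of G joins A to C \ A.  Setting
   d_{ij} := 1 on every pair separating A from C \ A keeps d feasible: a
   triangle constraint d_{ik} + d_{kj} >= d_{ij} with {i,j} separated and
   k in N(i,j) is satisfied because k either leaves C or is separated from
   i or from j ("split_feasible").  Every raised pair is a non-edge, where
   B_{ij} = -d_i d_j / 2m < 0 (no isolated vertices), so the objective cannot
   decrease, and it strictly increases because C is G_d-connected, whence
   some separated pair had d_{uv} = 0 ("obj_lt_raise").  This contradicts
   optimality ("optimal_no_zero_cut"); the theorem follows by applying it to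
   the component of x in G[C], using that a G_d-path from A to C \ A must
   cross the cut ("connect_cross"). *)

Lemma triangle01E (a b c : bool) :
  (((a : nat)%:R <= (b : nat)%:R + (c : nat)%:R :> rat)%R) = (a ==> b || c).
Proof. by case: a; case: b; case: c. Qed.

Lemma connect_cross (T : finType) (r : rel T) (P : pred T) x y :
  connect r x y -> P x -> ~~ P y -> exists u v, [/\ P u, ~~ P v & r u v].
Proof.
move=> /connectP [p]; elim: p x => [|z p IH] x /=; first by move=> _ -> ->.
move=> /andP [rxz pz] ly Px Py.
case Pz: (P z); first exact: IH pz ly Pz Py.
by exists x, z; rewrite Px Pz rxz.
Qed.

Lemma component_step (T : finType) (r : rel T) x0 i k :
  i \in component r x0 -> r i k -> k \in component r x0.
Proof. by rewrite !inE => ci rik; apply: connect_trans ci (connect1 rik). Qed.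

Lemma component_connect (T : finType) (r : rel T) x0 x y :
  connect_sym r -> x \in component r x0 -> y \in component r x0 ->
  connect r x y.
Proof. by move=> rsym; rewrite !inE rsym => cx0; apply: connect_trans. Qed.

Section CutSplit.
Variables (T : finType) (e : rel T) (d : T -> T -> bool) (C A : {set T}).
Hypothesis esym : symmetric e.
Hypothesis dfeas : feasible_sparse e d.
Hypothesis C_closed : forall i k, i \in C -> i != k -> ~~ d i k -> k \in C.
Hypothesis A_sub : A \subset C.
Hypothesis A_closed : forall i k, i \in A -> e i k -> k \in C -> k \in A.

Definition cut (i j : T) : bool := [&& i \in A, j \in C & j \notin A].

Definition split_d (i j : T) : bool := [|| d i j, cut i j | cut j i].

Lemma cut_nonedge i j : cut i j -> ~~ e i j.
Proof.
case/and3P=> Ai Cj nAj; apply/negP=> eij.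
by rewrite (A_closed Ai eij Cj) in nAj.
Qed.

Lemma split_d_sym i j : split_d i j = split_d j i.
Proof. by rewrite /split_d dfeas.1 orbCA orbC orbA. Qed.

Lemma cut_triangle i j k : cut i j -> Nij e i j k -> split_d i k || split_d k j.
Proof.
move=> cij /and3P [eijk ki kj]; have /and3P [Ai Cj nAj] := cij.
apply/negPn/negP; rewrite /split_d !negb_or.
case/andP=> /and3P [dik nik _] /and3P [_ nkj _].
have Ck : k \in C by apply: C_closed dik; [exact: (subsetP A_sub) | rewrite eq_sym].
case/orP: eijk => [eik | ejk].
  by rewrite /cut (A_closed Ai eik Ck) Cj nAj in nkj.
have nAk : k \notin A.
  by apply/negP=> Ak; rewrite (A_closed Ak _ Cj) // esym in nAj.
by rewrite /cut Ai Ck nAk in nik.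
Qed.

Lemma split_feasible : feasible_sparse e split_d.
Proof.
have [_ [drefl dtri]] := dfeas.
split; first exact: split_d_sym.
split; first by move=> i; rewrite /split_d drefl /cut; case: (i \in A); rewrite ?andbF.
move=> i j k ij nij; rewrite /dval triangle01E; apply/implyP.
case/or3P=> [dij | cij | cji].
- move: (dtri i j k ij nij); rewrite /dval triangle01E dij /=.
  by case/orP=> h; rewrite /split_d h ?orbT.
- exact: (cut_triangle cij nij).
- have nji : Nij e j i k by case/and3P: nij => ? ? ?; rewrite /Nij orbC; apply/and3P.
  by rewrite orbC (split_d_sym k j) (split_d_sym i k); exact: (cut_triangle cji nji).
Qed.

End CutSplit.

Section Objective.
Variables (T : finType) (e : rel T).

Lemma modB_nonedge_le0 i j : ~~ e i j -> (modB e i j <= 0)%R.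
Proof. by move=> /negbTE eij; rewrite /modB eij sub0r oppr_le0 divr_ge0 ?ler0n. Qed.

Lemma modB_nonedge_lt0 i j :
  ~~ e i j -> (0 < deg e i)%N -> (0 < deg e j)%N -> (modB e i j < 0)%R.
Proof.
move=> /negbTE eij di dj.
have tpos : (0 < twom e)%N.
  by apply: leq_trans di _; rewrite /twom (bigD1 i) //= leq_addr.
by rewrite /modB eij sub0r oppr_lt0 divr_gt0 // ltr0n ?muln_gt0 ?di.
Qed.

Lemma obj_lt_raise (d d' : T -> T -> bool) u v :
  (0 < twom e)%N -> (forall i j, d i j -> d' i j) ->
  (forall i j, d' i j -> ~~ d i j -> (modB e i j <= 0)%R) ->
  d' u v -> ~~ d u v -> (modB e u v < 0)%R ->
  (obj_sparse e d < obj_sparse e d')%R.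
Proof.
move=> tpos dd' raise_le0 d'uv duv Buv.
have term i j : (modB e i j * dval d' i j <= modB e i j * dval d i j)%R.
  rewrite /dval; case dij: (d i j); first by rewrite dd'.
  by case d'ij: (d' i j); rewrite ?mulr1 ?mulr0 ?raise_le0 ?dij.
have term_uv : (modB e u v * dval d' u v < modB e u v * dval d u v)%R.
  by rewrite /dval d'uv (negbTE duv) mulr1 mulr0.
have sum_lt : (\sum_i \sum_j modB e i j * dval d' i j <
               \sum_i \sum_j modB e i j * dval d i j)%R.
  rewrite (bigD1 u) //= [X in (_ < X)%R](bigD1 u) //=.
  apply: ltr_leD; last by apply: ler_sum => i _; apply: ler_sum.
  rewrite (bigD1 v) //= [X in (_ < X)%R](bigD1 v) //=.
  by apply: ltr_leD => //; apply: ler_sum.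
by rewrite /obj_sparse !mulNr ltrN2 ltr_pM2l // div1r invr_gt0 ltr0n.
Qed.

End Objective.

Lemma optimal_no_zero_cut (T : finType) (e : rel T) (d : T -> T -> bool)
    (C A : {set T}) u v :
  symmetric e -> no_isolated e -> optimal_sparse e d ->
  (forall i k, i \in C -> i != k -> ~~ d i k -> k \in C) -> A \subset C ->
  (forall i k, i \in A -> e i k -> k \in C -> k \in A) ->
  cut C A u v -> d u v.
Proof.
move=> esym noiso [dfeas dopt] C_closed A_sub A_closed cuv; apply/negPn/negP=> duv.
have degpos i : (0 < deg e i)%N.
  by have [j eij] := noiso i; rewrite card_gt0; apply/set0Pn; exists j; rewrite inE.
have tpos : (0 < twom e)%N by rewrite /twom (bigD1 u) //= addn_gt0 degpos.
have raise_le0 i j : split_d d C A i j -> ~~ d i j -> (modB e i j <= 0)%R.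
  rewrite /split_d => /or3P [-> // | cij | cji] _; apply: modB_nonedge_le0.
    exact: cut_nonedge A_closed _ _ cij.
  by rewrite esym; apply: cut_nonedge A_closed _ _ cji.
have := dopt _ (split_feasible esym dfeas C_closed A_sub A_closed).
apply/negP; rewrite -ltNge; apply: (obj_lt_raise tpos _ raise_le0 _ duv).
- by move=> i j dij; rewrite /split_d dij.
- by rewrite /split_d cuv orbT.
- by apply: modB_nonedge_lt0; rewrite ?degpos //; apply: cut_nonedge A_closed _ _ cuv.
Qed.

Theorem mainTheorem2 (T : finType) (e : rel T) (d : T -> T -> bool) :
  simple_graph e -> no_isolated e -> (1 <= num_edges e)%N ->
  optimal_sparse e d ->
  forall C : {set T}, (exists x, C = component (Gd d) x) ->
    induced_connected e C.
Proof.
move=> [esym _] noiso _ dopt C [x0 ->] x y Cx Cy.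
set C0 := component (Gd d) x0 in Cx Cy *.
set eC := [rel u v | [&& e u v, u \in C0 & v \in C0]].
apply/negPn/negP=> nxy.
(* A is the component of x in G[C]; it is closed under edges of G inside C. *)
pose A := [set z in C0 | connect eC x z].
have inA z : (z \in A) = (z \in C0) && connect eC x z by rewrite inE.
have A_sub : A \subset C0 by apply/subsetP=> z; rewrite inA => /andP [].
have A_closed i k : i \in A -> e i k -> k \in C0 -> k \in A.
  rewrite !inA => /andP [Ci ci] eik Ck; rewrite Ck.
  by apply: connect_trans ci (connect1 _); rewrite /= eik Ci Ck.
have C_closed i k : i \in C0 -> i != k -> ~~ d i k -> k \in C0.
  by move=> Ci ik dik; apply: component_step Ci _; rewrite /Gd /= ik dik.
have Gd_sym : connect_sym (Gd d).
  by apply: sym_connect_sym => i j; rewrite /Gd /= eq_sym dopt.1.1.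
(* A G_d-path from x to y leaves A along a zero-distance pair inside C. *)
have [u [v [Au nAv Guv]]] : exists u v, [/\ u \in A, v \notin A & Gd d u v].
  apply: (connect_cross (P := [in A]) (component_connect Gd_sym Cx Cy)).
    by rewrite inA Cx connect0.
  by rewrite inA Cy.
have /andP [uv duv] := Guv.
have Cv : v \in C0 by apply: C_closed uv duv; apply: (subsetP A_sub).
have cuv : cut C0 A u v by rewrite /cut Au Cv.
by rewrite (optimal_no_zero_cut esym noiso dopt C_closed A_sub A_closed cuv) in duv.
Qed.
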